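(* For every $j\in[N-1]$ and $\lambda\in\{0,1\}^N$ one has ${\bf s}_j(\mathbb{b}(\lambda))=\mathbb{b}(s_j\lambda)$, and, for the extension of ${\bf s}_j$ to $\mathbb{V}_N^{\mathrm{loc}}$, ${\bf s}_j(\mathbb{b}_\lambda)=\mathbb{b}_{s_j\lambda}$.
   Context: Fix $N\ge2$. $V=\mathbb{C}^2$ with basis $v_0,v_1$, ${\bf P}=\mathbb{C}[t_1,\dots,t_N]$, $\mathbb{V}_N=V^{\otimes N}\otimes{\bf P}$ with basis $v_\lambda$, $\lambda\in\{0,1\}^N$. Matrices on $V\otimes V$ are in the ordered basis $v_0\otimes v_0,v_0\otimes v_1,v_1\otimes v_0,v_1\otimes v_1$ (columns = images); $L(x,t)=\begin{pmatrix}1&0&0&0\\0&x+t&1&0\\0&1&0&0\\0&0&0&1\end{pmatrix}$. On $V[x]\otimes\mathbb{V}_N$ (factors $0,\dots,N$) let $M(x)=L_{0N}(x,t_N)\cdots L_{01}(x,t_1)$, $L_{0j}(x,t_j)$ acting as $L(x,t_j)$ on factors $0,j$ (factor $0$ first); define the ${\bf P}[x]$-linear operator $C(x)$ on $\mathbb{V}_N[x]$ by $M(x)(v_0\otimes w)=v_0\otimes A(x)w+v_1\otimes C(x)w$. For $\lambda\in\{0,1\}^N$ let $I_0=\{i_1<\dots<i_k\}=\{i:\lambda_i=0\}$ and $\mathbb{b}(\lambda)=C(-t_{i_1})\cdots C(-t_{i_k})v_{(1,\dots,1)}\in\mathbb{V}_N$. Let ${\bf P}^{\mathrm{loc}}={\bf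 P}[(t_a-t_b)^{-1}:a\ne b]$, $\mathbb{V}_N^{\mathrm{loc}}=V^{\otimes N}\otimes{\bf P}^{\mathrm{loc}}$, and $\mathbb{b}_\lambda=\prod_{b\in I_0,\,a\notin I_0}(t_a-t_b)^{-1}\,\mathbb{b}(\lambda)$. The operator ${\bf s}_j$ on $\mathbb{V}_N$ (and on $\mathbb{V}_N^{\mathrm{loc}}$) is defined by ${\bf s}_j(fv_\lambda)=s_j(f)\,(v_\lambda+(t_j-t_{j+1})v_{s_j\lambda})$ if $\lambda_j<\lambda_{j+1}$ and ${\bf s}_j(fv_\lambda)=s_j(f)v_\lambda$ otherwise, where $s_j\lambda$ swaps $\lambda_j,\lambda_{j+1}$ and $s_j(f)$ swaps $t_j,t_{j+1}$. *)

From HB Require Import structures.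
From Stdlib Require Import Rdefinitions.
From mathcomp Require Import all_boot all_order all_algebra all_fingroup.
From mathcomp Require Import Rstruct complex.
From mathcomp Require Import mpoly.
Set Implicit Arguments. Unset Strict Implicit. Unset Printing Implicit Defensive.
Import GRing.Theory.
Local Open Scope ring_scope.

Definition Cx : fieldType := complex Rdefinitions.R.

(* P = C[t_1,...,t_N]; variable t_{i+1} is 'X_i, i : 'I_N (0-based). *)
Definition Pol (N : nat) := {mpoly Cx[N]}.

(* Indices lambda in {0,1}^N: false = 0, true = 1. *)
Definition lam (N : nat) := {ffun 'I_N -> bool}.

(* An element of V^{(x)N} (x) R is the coefficient family (w_lambda) on the basis v_lambda. *)
Definition Vec (N : nat) (R : Type) := {ffun lam N -> R}.
(* Element of V (x) V^{(x)N} (x) R (factor 0 first): coefficients on v_mu (x) v_lambda. *)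
Definition Vec0 (N : nat) (R : Type) := {ffun bool * lam N -> R}.

Section Generic.
Variables (N : nat) (R : comNzRingType).

Definition ev (l : lam N) : Vec N R := [ffun m => (m == l)%:R].

Definition ones : lam N := [ffun _ => true].

Definition upd (l : lam N) (j : 'I_N) (b : bool) : lam N :=
  [ffun i => if i == j then b else l i].

Definition swapl (l : lam N) (j j' : 'I_N) : lam N :=
  [ffun i => if i == j then l j' else if i == j' then l j else l i].

(* index of v_b0 (x) v_b1 in the ordered basis v0v0, v0v1, v1v0, v1v1 *)
Definition pidx (b0 b1 : bool) : 'I_4 := inord (2 * b0 + b1).

(* the matrix L(x,t) (columns = images) *)
Definition Lmat (x t : R) : 'M[R]_4 :=
  \matrix_(i < 4, k < 4)
    nth 0 (nth [::] [:: [:: 1; 0; 0; 0];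
                        [:: 0; x + t; 1; 0];
                        [:: 0; 1; 0; 0];
                        [:: 0; 0; 0; 1]] i) k.

Definition Lop (x tj : R) (j : 'I_N) (w : Vec0 N R) : Vec0 N R :=
  [ffun p : bool * lam N =>
     \sum_(mu : bool) \sum_(b : bool)
        Lmat x tj (pidx p.1 (p.2 j)) (pidx mu b) * w (mu, upd p.2 j b)].

(* M(x) = L_{0N}(x,t_N) ... L_{01}(x,t_1)  (L_{01} applied first) *)
Definition Mop (t : 'I_N -> R) (x : R) (w : Vec0 N R) : Vec0 N R :=
  foldl (fun w j => Lop x (t j) j w) w (enum 'I_N).

(* C(x): M(x)(v_0 (x) w) = v_0 (x) A(x) w + v_1 (x) C(x) w *)
Definition Cop (t : 'I_N -> R) (x : R) (w : Vec N R) : Vec N R :=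
  [ffun l => Mop t x [ffun p : bool * lam N => if p.1 then 0 else w p.2] (true, l)].

(* b(lambda) = C(-t_{i_1}) ... C(-t_{i_k}) v_{(1,...,1)}, I_0 = {i_1 < ... < i_k} *)
Definition bvec (t : 'I_N -> R) (l : lam N) : Vec N R :=
  foldr (fun i w => Cop t (- t i) w) (ev ones) [seq i <- enum 'I_N | ~~ l i].

Definition sop (sigma : R -> R) (tj tj1 : R) (j j' : 'I_N) (w : Vec N R) : Vec N R :=
  [ffun m => \sum_(l : lam N)
     sigma (w l) * ((l == m)%:R +
        (if ~~ l j && l j' then (tj - tj1) * (swapl l j j' == m)%:R else 0))].

End Generic.

Section Concrete.
Variable N : nat.

Definition tP (i : 'I_N) : Pol N := 'X_i.

Definition sjP (j j' : 'I_N) (f : Pol N) : Pol N := msym (tperm j j') f.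

(* P^loc is realised inside the fraction field Frac(P). *)
Definition Kf := {fraction (Pol N)}.

Definition sjK (j j' : 'I_N) (x : Kf) : Kf :=
  let r := generic_quotient.repr x in tofrac (sjP j j' r.1) / tofrac (sjP j j' r.2).

Definition bP (l : lam N) : Vec N (Pol N) := bvec tP l.

Definition bK (l : lam N) : Vec N Kf :=
  [ffun m => (\prod_(b : 'I_N | ~~ l b) \prod_(a : 'I_N | l a)
                 (tofrac (tP a - tP b))^-1) * tofrac (bP l m)].

Definition sopP (j j' : 'I_N) : Vec N (Pol N) -> Vec N (Pol N) :=
  sop (sjP j j') (tP j) (tP j') j j'.

Definition sopK (j j' : 'I_N) : Vec N Kf -> Vec N Kf :=
  sop (sjK j j') (tofrac (tP j)) (tofrac (tP j')) j j'.

End Concrete.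

(* The operator s_j is the substitution sigma : t_j <-> t_{j+1} on coefficients
   followed by 1 + (t_j - t_{j+1}) E, where E maps v_0 (x) v_1 to v_1 (x) v_0 in the
   factors j, j+1.  Extended trivially to the auxiliary factor, it commutes with
   L_0i(x, t_i) for i <> j, j+1 (up to x |-> sigma x), and passes through the pair
   L_0,j+1 L_0j by the RLL-type relation of [Lrow2_exchange]; hence
   s_j C(x) = C(sigma x) s_j.  Since s_j fixes v_(1,...,1), s_j b(lambda) is the
   product of the C(-t_tau(i)), i in I_0, tau = (j j+1), applied to v_(1,...,1);
   tau(I_0) is the zero set of s_j lambda, and the order of the factors changes only
   when j, j+1 are both in I_0, where C(x) C(y) = C(y) C(x) follows from the
   Yang-Baxter relation with R(u) = L(u, 0).  For b_lambda, sigma extends to the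
   fraction field and maps the prefactor of b_lambda to that of b_(s_j lambda). *)

From HB Require Import structures.
From mathcomp Require Import all_boot all_algebra all_fingroup.
From mathcomp Require Import mpoly ring.
Set Implicit Arguments. Unset Strict Implicit. Unset Printing Implicit Defensive.
Import GRing.Theory.
Local Open Scope ring_scope.
Local Open Scope quotient_scope.

Section Foldl.
Variables (I : eqType) (V : Type).

Lemma foldl_intertwine (V' : Type) (r : V -> V') (f : I -> V -> V) (g : I -> V' -> V') s v :
  (forall i u, i \in s -> r (f i u) = g i (r u)) ->
  r (foldl (fun u i => f i u) v s) = foldl (fun u i => g i u) (r v) s.
Proof.
elim: s v => [//|i s IH] v /= fg; rewrite IH => [|k u ks]; first by rewrite fg ?mem_head.
by apply: fg; rewrite inE ks orbT.
Qed.

Lemma foldl_interleave (f g : I -> V -> V) s v : uniq s ->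
  (forall i k u, i != k -> f i (g k u) = g k (f i u)) ->
  foldl (fun u i => f i u) (foldl (fun u i => g i u) v s) s =
  foldl (fun u i => f i (g i u)) v s.
Proof.
move=> + fgC; elim: s v => [//|i s IH] v /= /andP[i_s uniq_s].
rewrite (@foldl_intertwine _ (f i) g g) ?IH // => k u ks.
by apply: fgC; apply: contraNneq i_s => ->.
Qed.

End Foldl.

Section Indices.
Variable N : nat.
Implicit Types (l m : lam N) (i k : 'I_N) (b c : bool).

Lemma upd_same l i b : upd l i b i = b.
Proof. by rewrite ffunE eqxx. Qed.

Lemma upd_other l i b k : k != i -> upd l i b k = l k.
Proof. by move=> ki; rewrite ffunE (negbTE ki). Qed.

Lemma upd_upd l i b c : upd (upd l i b) i c = upd l i c.
Proof. by apply/ffunP=> k; rewrite !ffunE; case: eqP. Qed.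

Lemma updC l i k b c : i != k -> upd (upd l i b) k c = upd (upd l k c) i b.
Proof.
move=> ik; apply/ffunP=> q; rewrite !ffunE.
by case: (eqVneq q k) => [->|//]; rewrite eq_sym (negbTE ik).
Qed.

Variables j j' : 'I_N.
Hypothesis neq_jj' : j != j'.

Lemma swaplE l i : swapl l j j' i = l (tperm j j' i).
Proof.
rewrite ffunE; case: (tpermP j j' i) => [->|->|/eqP ij /eqP ij'].
- by rewrite eqxx.
- by rewrite eq_sym (negbTE neq_jj') eqxx.
- by rewrite (negbTE ij) (negbTE ij').
Qed.

Lemma swapl_j l : swapl l j j' j = l j'.
Proof. by rewrite ffunE eqxx. Qed.

Lemma swapl_j' l : swapl l j j' j' = l j.
Proof. by rewrite swaplE tpermR. Qed.

Lemma swapl_other l i : i != j -> i != j' -> swapl l j j' i = l i.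
Proof. by move=> ij ij'; rewrite swaplE tpermD // eq_sym. Qed.

Lemma swaplK l : swapl (swapl l j j') j j' = l.
Proof. by apply/ffunP=> i; rewrite !swaplE tpermK. Qed.

Lemma upd_swapl l i b : i != j -> i != j' ->
  upd (swapl l j j') i b = swapl (upd l i b) j j'.
Proof.
move=> ij ij'; apply/ffunP=> q; rewrite !ffunE.
case: (eqVneq q j) => [->|_]; last case: (eqVneq q j') => [->|_] //;
  by rewrite ![_ == i]eq_sym (negbTE ij) (negbTE ij').
Qed.

Lemma upd2_swapl l b c :
  upd (upd (swapl l j j') j b) j' c = upd (upd l j b) j' c.
Proof.
by apply/ffunP=> q; rewrite !ffunE; case: eqP => // /eqP qj'; case: eqP.
Qed.

Lemma swapl_upd2 l b c :
  swapl (upd (upd l j b) j' c) j j' = upd (upd l j c) j' b.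
Proof.
apply/ffunP=> q; rewrite swaplE !ffunE.
case: (tpermP j j' q) => [->|->|/eqP qj /eqP qj'];
  by rewrite ?eqxx ?(negbTE neq_jj') ?(negbTE qj) ?(negbTE qj').
Qed.

Lemma sopE (R : comNzRingType) (sg : R -> R) (tj tj' : R) (w : Vec N R) m :
  sop sg tj tj' j j' w m =
  sg (w m) + (if m j && ~~ m j' then tj - tj' else 0) * sg (w (swapl m j j')).
Proof.
rewrite ffunE; under eq_bigr do rewrite mulrDr.
rewrite big_split /= (bigD1 m) //= eqxx mulr1 big1 => [|l /negbTE ->]; last by rewrite mulr0.
rewrite addr0 (bigD1 (swapl m j j')) //= swaplK eqxx swapl_j swapl_j' big1 => [|l lm].
  by rewrite addr0; case: (m j); case: (m j') => /=; rewrite ?mulr0 ?mul0r ?mulr1 // mulrC.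
case: ifP; rewrite ?mulr0 // => _.
suff /negbTE -> : swapl l j j' != m by rewrite !mulr0.
by apply: contra lm => /eqP <-; rewrite swaplK.
Qed.

End Indices.

Section LmatrixRows.
Variables (N : nat) (R : comNzRingType).
Implicit Types (x t : R) (f g : bool -> bool -> R).

(* [Lrow a s x t f] is the (v_a (x) v_s)-coordinate of L(x, t) applied to
   the vector with coordinates [f mu b] on v_mu (x) v_b. *)
Definition Lrow (a s : bool) x t f : R :=
  match a, s with
  | false, false => f false false
  | false, true => (x + t) * f false true + f true false
  | true, false => f false true
  | true, true => f true true
  end.

Lemma eq_Lrow a s x t f g : (forall mu b, f mu b = g mu b) -> Lrow a s x t f = Lrow a s x t g.
Proof. by move=> fg; case: a; case: s; rewrite /= !fg. Qed.

Lemma rmorph_Lrow (sg : {rmorphism R -> R}) a s x t f :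
  sg (Lrow a s x t f) = Lrow a s (sg x) (sg t) (fun mu b => sg (f mu b)).
Proof. by case: a; case: s; rewrite /= ?rmorphD ?rmorphM ?rmorphD. Qed.

Lemma Lrow_linear a s x t f g c :
  Lrow a s x t (fun mu b => f mu b + c * g mu b) = Lrow a s x t f + c * Lrow a s x t g.
Proof. by case: a; case: s => /=; ring. Qed.

Lemma LopE x t (i : 'I_N) (w : Vec0 N R) a m :
  Lop x t i w (a, m) = Lrow a (m i) x t (fun mu b => w (mu, upd m i b)).
Proof.
rewrite /Lop ffunE /= !big_bool /= /pidx.
by case: a; case: (m i); rewrite !mxE /= ?inordK //=; ring.
Qed.

Lemma Lop2E x t t' (i k : 'I_N) (w : Vec0 N R) a m (F : bool -> bool -> bool -> R) :
  i != k -> (forall nu e b, w (nu, upd (upd m i e) k b) = F nu e b) ->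
  Lop x t' k (Lop x t i w) (a, m) =
  Lrow a (m k) x t' (fun mu b => Lrow mu (m i) x t (fun nu e => F nu e b)).
Proof.
move=> ik wF; rewrite LopE; apply: eq_Lrow => mu b; rewrite LopE upd_other //.
by apply: eq_Lrow => nu e; rewrite updC 1?eq_sym.
Qed.

(* Coordinate form of (1 + (tj - tj')E) L_0j'(x, tj) L_0j(x, tj')
                    = L_0j'(x, tj') L_0j(x, tj) (1 + (tj - tj')E). *)
Lemma Lrow2_exchange a s s' x tj tj' (H : bool -> bool -> bool -> R) :
  Lrow a s' x tj (fun mu b => Lrow mu s x tj' (fun nu e => H nu e b)) +
  (if s && ~~ s' then tj - tj' else 0) *
     Lrow a s x tj (fun mu b => Lrow mu s' x tj' (fun nu e => H nu e b))
  = Lrow a s' x tj' (fun mu b => Lrow mu s x tj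
     (fun nu e => H nu e b + (if e && ~~ b then tj - tj' else 0) * H nu b e)).
Proof. by case: a; case: s; case: s' => /=; ring. Qed.

Lemma Lrow_comm a s x t a' s' y t' (F : bool -> bool -> bool -> bool -> R) :
  Lrow a s x t (fun mu b => Lrow a' s' y t' (fun nu e => F mu b nu e)) =
  Lrow a' s' y t' (fun nu e => Lrow a s x t (fun mu b => F mu b nu e)).
Proof. by case: a; case: s; case: a'; case: s' => /=; ring. Qed.

Lemma Lrow_YBE a1 a2 s x y t (G : bool -> bool -> bool -> R) :
  Lrow a1 a2 (x - y) 0
    (fun c d => Lrow c s x t (fun mu b => Lrow d b y t (fun nu e => G mu nu e))) =
  Lrow a2 s y t
    (fun nu b => Lrow a1 b x t (fun mu e => Lrow mu nu (x - y) 0 (fun c d => G c d e))).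
Proof. by case: a1; case: a2; case: s => /=; ring. Qed.

End LmatrixRows.

Section AuxiliaryExtension.
Variables (N : nat) (R : comNzRingType) (j j' : 'I_N).
Hypothesis neq_jj' : j != j'.
Variables (sg : {rmorphism R -> R}) (tj tj' : R).

Definition sopV0 (w : Vec0 N R) : Vec0 N R :=
  [ffun p => sg (w p) +
     (if p.2 j && ~~ p.2 j' then tj - tj' else 0) * sg (w (p.1, swapl p.2 j j'))].

Lemma sopV0_Lop x t (i : 'I_N) w : i != j -> i != j' -> sg t = t ->
  sopV0 (Lop x t i w) = Lop (sg x) t i (sopV0 w).
Proof.
move=> ij ij' sgt; apply/ffunP=> -[a m].
rewrite [LHS]ffunE /= !LopE !rmorph_Lrow sgt swapl_other // -Lrow_linear.
by apply: eq_Lrow => mu b; rewrite ffunE /= !upd_other 1?eq_sym // upd_swapl.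
Qed.

Lemma sopV0_Lop2 x w : sg tj = tj' -> sg tj' = tj ->
  sopV0 (Lop x tj' j' (Lop x tj j w)) = Lop (sg x) tj' j' (Lop (sg x) tj j (sopV0 w)).
Proof.
move=> sgj sgj'; apply/ffunP=> -[a m].
set F := fun nu e b => w (nu, upd (upd m j e) j' b).
rewrite [RHS](Lop2E _ _ _ _ (F := fun nu e b => sg (F nu e b) +
   (if e && ~~ b then tj - tj' else 0) * sg (F nu b e))) //; last first.
  by move=> nu e b; rewrite ffunE /= upd_other // !upd_same swapl_upd2.
rewrite [LHS]ffunE /= !(Lop2E _ _ _ _ (F := F)) //; last by move=> *; rewrite upd2_swapl.
rewrite swapl_j swapl_j' // !rmorph_Lrow.
under eq_Lrow do rewrite rmorph_Lrow.
under [in X in _ + _ * X]eq_Lrow do rewrite rmorph_Lrow.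
by rewrite sgj sgj' Lrow2_exchange.
Qed.

End AuxiliaryExtension.

Lemma neq_ord_succ N (j j' : 'I_N) : nat_of_ord j' = j.+1 -> j != j'.
Proof. by move=> jj'; rewrite -val_eqE /= jj' ltn_eqF. Qed.

Lemma enum_ord_adjacent N (j j' : 'I_N) : nat_of_ord j' = j.+1 ->
  exists s1 s2, [/\ enum 'I_N = s1 ++ j :: j' :: s2,
    j \notin s1, j' \notin s1, j \notin s2 & j' \notin s2].
Proof.
move=> jj'; exists (take j (enum 'I_N)), (drop j'.+1 (enum 'I_N)).
have size_enum : size (enum 'I_N) = N by rewrite size_enum_ord.
have enumE : enum 'I_N = take j (enum 'I_N) ++ j :: j' :: drop j'.+1 (enum 'I_N).
  rewrite -{1}(cat_take_drop j (enum 'I_N)) (drop_nth j) ?size_enum //.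
  by rewrite (drop_nth j) ?size_enum -?jj' // !nth_ord_enum.
have := enum_uniq 'I_N; rewrite {1}enumE cat_uniq /= !inE negb_or.
by case/and5P => _ /andP[-> /norP[-> _]] /norP[_ ->] ->.
Qed.

Section Intertwining.
Variables (N : nat) (R : comNzRingType) (j j' : 'I_N).
Hypothesis jj' : nat_of_ord j' = j.+1.
Variables (sg : {rmorphism R -> R}) (t : 'I_N -> R).
Hypothesis sg_t : forall i, sg (t i) = t (tperm j j' i).

Let neq_jj' : j != j' := neq_ord_succ jj'.
Local Notation S0 := (sopV0 j j' sg (t j) (t j')).

Lemma sopV0_Mop x w : S0 (Mop t x w) = Mop t (sg x) (S0 w).
Proof.
have [s1 [s2 [enumE j_s1 j'_s1 j_s2 j'_s2]]] := enum_ord_adjacent jj'.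
have off s : j \notin s -> j' \notin s -> forall i u, i \in s ->
    S0 (Lop x (t i) i u) = Lop (sg x) (t i) i (S0 u).
  move=> j_s j'_s i u i_s; have [ij ij'] := (memPn j_s i i_s, memPn j'_s i i_s).
  by rewrite sopV0_Lop // sg_t tpermD // eq_sym.
rewrite /Mop enumE !foldl_cat /=.
have intertwine s := foldl_intertwine (r := S0) (g := fun i => Lop (sg x) (t i) i) (s := s).
rewrite intertwine; last exact: off.
by rewrite (sopV0_Lop2 neq_jj') ?sg_t ?tpermL ?tpermR // intertwine //; apply: off.
Qed.

Local Notation S := (sop sg (t j) (t j') j j').

Lemma sop_Cop x w : S (Cop t x w) = Cop t (sg x) (S w).
Proof.
apply/ffunP=> m; rewrite sopE // !ffunE.
set w0 := [ffun p : bool * lam N => if p.1 then 0 else w p.2].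
have -> : sg (Mop t x w0 (true, m)) +
   (if m j && ~~ m j' then t j - t j' else 0) * sg (Mop t x w0 (true, swapl m j j'))
   = S0 (Mop t x w0) (true, m) by rewrite ffunE.
rewrite sopV0_Mop; congr (Mop _ _ _ _); apply/ffunP=> -[[] l].
  by rewrite !ffunE /= rmorph0 mulr0 addr0.
by rewrite [RHS]ffunE /= sopE // !ffunE.
Qed.

Lemma sop_ones : S (ev R (ones N)) = ev R (ones N).
Proof.
apply/ffunP=> m; rewrite sopE // !ffunE rmorph_nat.
case: ifP => [/andP[_ m_j'] | _]; last by rewrite mul0r addr0.
suff /negbTE -> : swapl m j j' != ones N by rewrite rmorph0 mulr0 addr0.
by apply: contraNneq m_j' => /ffunP/(_ j); rewrite swapl_j ffunE => ->.
Qed.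

Lemma sop_foldr_Cop w s :
  S (foldr (fun i => Cop t (- t i)) w s) =
  foldr (fun i => Cop t (- t i)) (S w) (map (tperm j j') s).
Proof. by elim: s => [//|i s IH] /=; rewrite sop_Cop rmorphN sg_t IH. Qed.

End Intertwining.

(* Two auxiliary copies of V, for the RLL relation with R(u) = L(u, 0). *)
Section TwoAuxiliarySpaces.
Variables (N : nat) (R : comNzRingType) (t : 'I_N -> R).

Definition Vec2 := {ffun bool * bool * lam N -> R}.

Definition Lop1 x s (i : 'I_N) (W : Vec2) : Vec2 :=
  [ffun p : bool * bool * lam N =>
     Lrow p.1.1 (p.2 i) x s (fun mu b => W (mu, p.1.2, upd p.2 i b))].
Definition Lop2 x s (i : 'I_N) (W : Vec2) : Vec2 :=
  [ffun p : bool * bool * lam N =>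
     Lrow p.1.2 (p.2 i) x s (fun nu b => W (p.1.1, nu, upd p.2 i b))].
Definition Rop12 u (W : Vec2) : Vec2 :=
  [ffun p : bool * bool * lam N => Lrow p.1.1 p.1.2 u 0 (fun c d => W (c, d, p.2))].

Definition Mop1 x W := foldl (fun W i => Lop1 x (t i) i W) W (enum 'I_N).
Definition Mop2 x W := foldl (fun W i => Lop2 x (t i) i W) W (enum 'I_N).

Lemma Lop1_Lop2C x y s s' i k W : i != k ->
  Lop1 x s i (Lop2 y s' k W) = Lop2 y s' k (Lop1 x s i W).
Proof.
move=> ik; apply/ffunP=> -[[a1 a2] m]; rewrite !ffunE /=.
rewrite (@eq_Lrow _ _ _ _ _ _ (fun mu b => Lrow a2 (m k) y s'
   (fun nu e => W (mu, nu, upd (upd m i b) k e)))); last first.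
  by move=> mu b; rewrite ffunE /= upd_other 1?eq_sym.
rewrite Lrow_comm; apply: eq_Lrow => nu e; rewrite ffunE /= upd_other //.
by apply: eq_Lrow => mu b; rewrite updC.
Qed.

Lemma Rop12_Lop1_Lop2 x y s i W :
  Rop12 (x - y) (Lop1 x s i (Lop2 y s i W)) = Lop2 y s i (Lop1 x s i (Rop12 (x - y) W)).
Proof.
apply/ffunP=> -[[a1 a2] m]; rewrite !ffunE /=.
rewrite (@eq_Lrow _ _ _ _ _ _ (fun c d => Lrow c (m i) x s (fun mu b => Lrow d b y s
   (fun nu e => W (mu, nu, upd m i e))))); last first.
  move=> c d; rewrite ffunE /=; apply: eq_Lrow => mu b.
  by rewrite ffunE /= upd_same; apply: eq_Lrow => nu e; rewrite upd_upd.
rewrite Lrow_YBE; apply: eq_Lrow => nu b; rewrite ffunE /= upd_same.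
by apply: eq_Lrow => mu e; rewrite ffunE /= upd_upd.
Qed.

Lemma Rop12_Mop1_Mop2 x y W :
  Rop12 (x - y) (Mop1 x (Mop2 y W)) = Mop2 y (Mop1 x (Rop12 (x - y) W)).
Proof.
rewrite /Mop1 /Mop2 foldl_interleave ?enum_uniq //; last by move=> *; apply: Lop1_Lop2C.
rewrite (@foldl_interleave _ _ (fun i => Lop2 y (t i) i) (fun i => Lop1 x (t i) i))
  ?enum_uniq //;
  last by move=> i k u ik; rewrite Lop1_Lop2C // eq_sym.
by apply: foldl_intertwine => i u _; rewrite Rop12_Lop1_Lop2.
Qed.

Definition slice1 (W : Vec2) a2 : Vec0 N R := [ffun p : bool * lam N => W (p.1, a2, p.2)].
Definition slice2 (W : Vec2) a1 : Vec0 N R := [ffun p : bool * lam N => W (a1, p.1, p.2)].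

Lemma slice1_Mop1 x W a2 : slice1 (Mop1 x W) a2 = Mop t x (slice1 W a2).
Proof.
apply: (foldl_intertwine (r := slice1^~ a2)) => i u _; apply/ffunP=> -[a m].
by rewrite LopE !ffunE; apply: eq_Lrow => mu b; rewrite ffunE.
Qed.

Lemma slice2_Mop2 x W a1 : slice2 (Mop2 x W) a1 = Mop t x (slice2 W a1).
Proof.
apply: (foldl_intertwine (r := slice2^~ a1)) => i u _; apply/ffunP=> -[a m].
by rewrite LopE !ffunE; apply: eq_Lrow => mu b; rewrite ffunE.
Qed.

Lemma Mop0 x : Mop t x 0 = 0.
Proof.
rewrite /Mop; elim: (enum 'I_N) => [//|i s IH] /=.
suff -> : Lop x (t i) i 0 = 0 by [].
apply/ffunP=> -[a m]; rewrite LopE ffunE (@eq_Lrow _ _ _ _ _ _ (fun _ _ => 0)).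
  by case: a; case: (m i) => /=; ring.
by move=> *; rewrite ffunE.
Qed.

Lemma CopE x w l :
  Cop t x w l = Mop t x [ffun p : bool * lam N => if p.1 then 0 else w p.2] (true, l).
Proof. by rewrite ffunE. Qed.

Definition vac2 (w : Vec N R) : Vec2 := [ffun p => if p.1.1 || p.1.2 then 0 else w p.2].

Lemma slice1_Mop2_vac2 y w :
  slice1 (Mop2 y (vac2 w)) true = [ffun p : bool * lam N => if p.1 then 0 else Cop t y w p.2].
Proof.
apply/ffunP=> -[a l]; rewrite !ffunE /=.
have -> : Mop2 y (vac2 w) (a, true, l) = slice2 (Mop2 y (vac2 w)) a (true, l) by rewrite ffunE.
rewrite slice2_Mop2; case: a.
  suff -> : slice2 (vac2 w) true = 0 by rewrite Mop0 ffunE.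
  by apply/ffunP => p; rewrite !ffunE.
by congr (Mop _ _ _ _); apply/ffunP => p; rewrite !ffunE.
Qed.

Lemma slice2_Mop1_vac2 x w :
  slice2 (Mop1 x (vac2 w)) true = [ffun p : bool * lam N => if p.1 then 0 else Cop t x w p.2].
Proof.
apply/ffunP=> -[a l]; rewrite !ffunE /=.
have -> : Mop1 x (vac2 w) (true, a, l) = slice1 (Mop1 x (vac2 w)) a (true, l) by rewrite ffunE.
rewrite slice1_Mop1; case: a.
  suff -> : slice1 (vac2 w) true = 0 by rewrite Mop0 ffunE.
  by apply/ffunP => p; rewrite !ffunE orbT.
by congr (Mop _ _ _ _); apply/ffunP => p; rewrite !ffunE orbF.
Qed.

Lemma Cop_comm x y w : Cop t x (Cop t y w) = Cop t y (Cop t x w).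
Proof.
apply/ffunP=> m.
have -> : Cop t x (Cop t y w) m = Mop1 x (Mop2 y (vac2 w)) (true, true, m).
  have -> : Mop1 x (Mop2 y (vac2 w)) (true, true, m) =
            slice1 (Mop1 x (Mop2 y (vac2 w))) true (true, m) by rewrite ffunE.
  by rewrite slice1_Mop1 slice1_Mop2_vac2 CopE.
have -> : Cop t y (Cop t x w) m = Mop2 y (Mop1 x (vac2 w)) (true, true, m).
  have -> : Mop2 y (Mop1 x (vac2 w)) (true, true, m) =
            slice2 (Mop2 y (Mop1 x (vac2 w))) true (true, m) by rewrite ffunE.
  by rewrite slice2_Mop2 slice2_Mop1_vac2 CopE.
have Rop12_vac2 : Rop12 (x - y) (vac2 w) = vac2 w.
  apply/ffunP=> -[[a1 a2] l]; rewrite ffunE.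
  by case: a1; case: a2; rewrite /= !ffunE /= ?mulr0 ?addr0.
by rewrite -[in RHS]Rop12_vac2 -Rop12_Mop1_Mop2 ffunE.
Qed.

End TwoAuxiliarySpaces.

Lemma sop_bvec N (R : comNzRingType) (j j' : 'I_N) (sg : {rmorphism R -> R})
    (t : 'I_N -> R) l :
  nat_of_ord j' = j.+1 -> (forall i, sg (t i) = t (tperm j j' i)) ->
  sop sg (t j) (t j') j j' (bvec t l) = bvec t (swapl l j j').
Proof.
move=> jj' sg_t; have neq_jj' := neq_ord_succ jj'.
have [s1 [s2 [enumE j_s1 j'_s1 j_s2 j'_s2]]] := enum_ord_adjacent jj'.
have tperm_zeros s : j \notin s -> j' \notin s ->
    map (tperm j j') [seq i <- s | ~~ l i] = [seq i <- s | ~~ swapl l j j' i].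
  move=> j_s j'_s; have off i : i \in s -> i != j /\ i != j'.
    by move=> i_s; rewrite (memPn j_s i i_s) (memPn j'_s i i_s).
  rewrite (@eq_in_filter _ _ (fun i => ~~ l i)) => [|i /off[ij ij']]; last first.
    by rewrite swapl_other.
  rewrite map_id_in // => i; rewrite mem_filter => /andP[_ /off[ij ij']].
  by rewrite tpermD // eq_sym.
rewrite /bvec sop_foldr_Cop // sop_ones // enumE -[j :: j' :: s2]/([:: j; j'] ++ s2).
rewrite !filter_cat !map_cat !foldr_cat (tperm_zeros s1) // (tperm_zeros s2) //=.
rewrite swapl_j swapl_j' //.
by case: (l j); case: (l j') => /=; rewrite ?tpermL ?tpermR // Cop_comm.
Qed.

Lemma fracE (R : idomainType) (x : {fraction R}) :
  x = tofrac (generic_quotient.repr x).1 / tofrac (generic_quotient.repr x).2.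
Proof.
set r := generic_quotient.repr x.
have den_r : tofrac r.2 != 0 by rewrite tofrac_eq0 denom_ratioP.
apply: (mulIf den_r); rewrite divfK //.
have E : \pi_({fraction R}) (FracField.mulf r (Ratio r.2 1)) =
          \pi_({fraction R}) (Ratio r.1 1).
  apply/eqquotP; rewrite /= FracField.equivfE /FracField.mulf.
  by rewrite !numden_Ratio ?mulf_neq0 ?oner_neq0 ?denom_ratioP // !mulr1 mulrC.
rewrite FracField.pi_mul in E.
by rewrite -[x in LHS]generic_quotient.reprK; unlock tofrac; exact: E.
Qed.

Section FractionMap.
Variables (R S : idomainType) (phi : {rmorphism R -> S}).
Hypothesis phi_inj : injective phi.

Definition fracmap (x : {fraction R}) : {fraction S} :=
  let r := generic_quotient.repr x in tofrac (phi r.1) / tofrac (phi r.2).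

Lemma tofrac_phi_neq0 b : b != 0 -> tofrac (phi b) != 0.
Proof. by rewrite tofrac_eq0 -(rmorph0 phi) (inj_eq phi_inj). Qed.

Lemma fracmap_div a b : b != 0 ->
  fracmap (tofrac a / tofrac b) = tofrac (phi a) / tofrac (phi b).
Proof.
move=> b_neq0; have := fracE (tofrac a / tofrac b); rewrite /fracmap.
case: (generic_quotient.repr _) => [[n d] /= d_neq0] abE.
apply/eqP; rewrite eqr_div ?tofrac_phi_neq0 // -!tofracM -!rmorphM tofrac_eq.
apply/eqP; congr (phi _); apply/eqP; rewrite -tofrac_eq !tofracM.
by rewrite -eqr_div ?tofrac_eq0 // abE.
Qed.

Lemma fracmap_tofrac a : fracmap (tofrac a) = tofrac (phi a).
Proof.
by rewrite -[tofrac a]divr1 -tofrac1 fracmap_div ?oner_neq0 // rmorph1 tofrac1 divr1.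
Qed.

Lemma fracmap_is_zmod_morphism : zmod_morphism fracmap.
Proof.
move=> x y; rewrite [x]fracE [y]fracE.
move: (generic_quotient.repr x) (generic_quotient.repr y) => [[a b] /= b0] [[c d] /= d0].
have subE (F : fieldType) (f : {rmorphism R -> F}) : f b != 0 -> f d != 0 ->
    f a / f b - f c / f d = f (a * d - c * b) / f (b * d).
  by move=> fb fd; rewrite -mulNr addf_div // rmorphB !rmorphM mulNr.
rewrite subE ?tofrac_eq0 // !fracmap_div ?mulf_neq0 //.
by rewrite (subE _ (@tofrac S \o phi)) ?tofrac_phi_neq0.
Qed.

Lemma fracmap_is_monoid_morphism : monoid_morphism fracmap.
Proof.
split=> [|x y]; first by rewrite -tofrac1 fracmap_tofrac rmorph1.
rewrite [x]fracE [y]fracE.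
move: (generic_quotient.repr x) (generic_quotient.repr y) => [[a b] /= b0] [[c d] /= d0].
by rewrite mulf_div -!tofracM !fracmap_div ?mulf_neq0 // !rmorphM mulf_div.
Qed.

End FractionMap.

Lemma msym_X n (R : comNzRingType) (s : 'S_n) (i : 'I_n) :
  msym s ('X_i : {mpoly R[n]}) = 'X_(s i).
Proof.
rewrite msymX; congr 'X_[_]; apply/mnmP => k; rewrite !mnmE.
by rewrite (canF_eq (permK s)).
Qed.

Section SwapOnPolynomials.
Variables (N : nat) (j j' : 'I_N).
Hypothesis jj' : nat_of_ord j' = j.+1.

Local Notation phi := (msym (tperm j j') : {rmorphism Pol N -> Pol N}).

Lemma sopP_bP l : sopP j j' (bP l) = bP (swapl l j j').
Proof. exact: (@sop_bvec N (Pol N) j j' phi (@tP N) l jj' (fun i => msym_X _ _ i)). Qed.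

Definition bfactor (l : lam N) : Kf N :=
  \prod_(b : 'I_N | ~~ l b) \prod_(a : 'I_N | l a) (tofrac (tP a - tP b))^-1.

Lemma bKE l m : bK l m = bfactor l * tofrac (bP l m).
Proof. by rewrite ffunE. Qed.

Let phi_inj : injective phi := @inj_msym _ _ (tperm j j').

(* Declared for this [phi] only: canonical-structure inference cannot supply the
   injectivity proof that a generic instance would need. *)
HB.instance Definition _ :=
  GRing.isZmodMorphism.Build _ _ (fracmap phi) (fracmap_is_zmod_morphism phi_inj).
HB.instance Definition _ :=
  GRing.isMonoidMorphism.Build _ _ (fracmap phi) (fracmap_is_monoid_morphism phi_inj).

Lemma fracmap_bfactor l : fracmap phi (bfactor l) = bfactor (swapl l j j').
Proof.
have neq_jj' := neq_ord_succ jj'.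
rewrite rmorph_prod [RHS](reindex_inj (@perm_inj _ (tperm j j'))) /=.
apply: eq_big => [b|b _]; first by rewrite swaplE // tpermK.
rewrite rmorph_prod [RHS](reindex_inj (@perm_inj _ (tperm j j'))) /=.
apply: eq_big => [a|a _]; first by rewrite swaplE // tpermK.
by rewrite fmorphV /= (fracmap_tofrac phi_inj) rmorphB /= /tP !msym_X.
Qed.

Lemma sopK_bK l : sopK j j' (bK l) = bK (swapl l j j').
Proof.
have neq_jj' := neq_ord_succ jj'.
apply/ffunP=> m; rewrite /sopK sopE // !bKE.
change (sjK j j') with (fracmap phi).
rewrite !rmorphM /= !(fracmap_tofrac phi_inj) fracmap_bfactor.
rewrite -sopP_bP /sopP sopE // tofracD tofracM mulrDr mulrCA.
by case: ifP; rewrite ?tofracB ?tofrac0.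
Qed.

End SwapOnPolynomials.

Theorem proposition2p13 (N : nat) (hN : (2 <= N)%N) (j j' : 'I_N)
    (hj : nat_of_ord j' = (nat_of_ord j).+1) (l : lam N) :
  sopP j j' (bP l) = bP (swapl l j j') /\
  sopK j j' (bK l) = bK (swapl l j j').
Proof.
by split; [apply: sopP_bP | apply: sopK_bK].
Qed.
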